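(* Let $R>0$ and $\Theta=(\alpha,\rho_r,\rho_d,\rho_s,\rho_0,T)$ with $\alpha>1$, $\rho_r,\rho_d,\rho_s,\rho_0>0$ and $T>1$ an integer. If $$\rho_r+2\rho_0\ \ge\ \frac{\alpha}{1+\lfloor\sqrt T\rfloor}+\frac{\alpha(1+\lfloor\sqrt T\rfloor)}{\lfloor\sqrt T\rfloor}\Big(2^{\frac{R}{1-\lfloor\sqrt T\rfloor/T}}-1\Big),$$ then every maximizer $(M,K,\tau)$ of $\zeta_{zf}(M,K,\tau,R,\Theta)$ over integers with $1\le K\le\tau<T$, $M>K$ satisfies $M=2$ and $K=1$; i.e. $M^\star_{zf}(R,\Theta)=2$, $K^\star_{zf}(R,\Theta)=1$.
   Context: For $M>K$, $1\le K\le\tau<T$ let $$\gamma_u=\frac{K+\tau}{2\tau(M-K)}\Big(2^{\frac{R}{K(1-\tau/T)}}-1\Big)+\sqrt{\Big(\frac{K+\tau}{2\tau(M-K)}\Big(2^{\frac{R}{K(1-\tau/T)}}-1\Big)\Big)^2+\frac{2^{\frac{R}{K(1-\tau/T)}}-1}{\tau(M-K)}}$$ and define $\zeta_{zf}(M,K,\tau,R,\Theta)>0$ by $$\frac{R}{\zeta_{zf}(M,K,\tau,R,\Theta)}=\alpha K\gamma_u+\rho_s+K\Big(\rho_d+\frac{8K^2\rho_0}{3T}\Big)+M\Big(\rho_r+2K\rho_0+\frac{4K^2\rho_0}{T}\Big).$$ $(M^\star_{zf},K^\star_{zf},\tau^\star)$ denotes the maximizer of $\zeta_{zf}$ over integers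 with $1\le K\le\tau<T$, $M>K$. *)

From Stdlib Require Import Reals Lra Lia.
Open Scope R_scope.

Definition snr_term (M K tau T : nat) (Rate : R) : R :=
  Rpower 2 (Rate / (INR K * (1 - INR tau / INR T))) - 1.

Definition gamma_u (M K tau T : nat) (Rate : R) : R :=
  let a := (INR K + INR tau) / (2 * INR tau * (INR M - INR K)) * snr_term M K tau T Rate in
  a + sqrt (a ^ 2 + snr_term M K tau T Rate / (INR tau * (INR M - INR K))).

Definition zeta_denom (M K tau : nat) (Rate alpha rho_r rho_d rho_s rho_0 : R) (T : nat) : R :=
  alpha * INR K * gamma_u M K tau T Rate + rho_s
  + INR K * (rho_d + 8 * INR K ^ 2 * rho_0 / (3 * INR T))
  + INR M * (rho_r + 2 * INR K * rho_0 + 4 * INR K ^ 2 * rho_0 / INR T).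

Definition zeta_zf (M K tau : nat) (Rate alpha rho_r rho_d rho_s rho_0 : R) (T : nat) : R :=
  Rate / zeta_denom M K tau Rate alpha rho_r rho_d rho_s rho_0 T.

Definition admissible (M K tau T : nat) : Prop :=
  (1 <= K)%nat /\ (K <= tau)%nat /\ (tau < T)%nat /\ (K < M)%nat.

(* Maximizing zeta_zf means minimizing its denominator.  Every admissible
   triple with M >= 3 pays at least three times the per-antenna cost
   rho_r + 2 rho_0 + 4 rho_0 / T, while the triple (2, 1, floor (sqrt T))
   pays it twice plus the power term alpha * gamma_u.  The hypothesis makes
   that power term at most rho_r + 2 rho_0, since
   sqrt (b^2 + 2 b e) <= b + e bounds gamma_u at (2, 1, tau) by
   1/(1+tau) + (1+tau)/tau * (2^(R/(1-tau/T)) - 1).  Hence M >= 3 is never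
   optimal, and M > K >= 1 then forces M = 2 and K = 1. *)
From Stdlib Require Import Reals Lra Lia.
Open Scope R_scope.

Lemma Rpower2_ge_1 (x : R) : 0 <= x -> 1 <= Rpower 2 x.
Proof.
  intro Hx. rewrite <- (Rpower_O 2) by lra.
  apply Rle_Rpower; lra.
Qed.

Lemma snr_term_nonneg M K tau T Rate :
  0 < Rate -> (1 <= K)%nat -> (tau < T)%nat -> 0 <= snr_term M K tau T Rate.
Proof.
  intros HR HK HtT. unfold snr_term.
  assert (HT : 0 < INR T) by (apply lt_0_INR; lia).
  assert (Htau : INR tau < INR T) by (apply lt_INR; lia).
  assert (HK1 : 1 <= INR K) by (apply (le_INR 1); lia).
  assert (Hfrac : 0 < 1 - INR tau / INR T).
  { replace (1 - INR tau / INR T) with ((INR T - INR tau) / INR T) by (field; lra).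
    apply Rdiv_lt_0_compat; lra. }
  enough (1 <= Rpower 2 (Rate / (INR K * (1 - INR tau / INR T)))) by lra.
  apply Rpower2_ge_1, Rlt_le, Rdiv_lt_0_compat; [lra | nra].
Qed.

Lemma gamma_u_nonneg M K tau T Rate :
  0 < Rate -> admissible M K tau T -> 0 <= gamma_u M K tau T Rate.
Proof.
  intros HR (HK & HKtau & HtT & HKM).
  pose proof (snr_term_nonneg M K tau T Rate HR HK HtT) as Hc.
  assert (HK1 : 1 <= INR K) by (apply (le_INR 1); lia).
  assert (Htau : 1 <= INR tau) by (apply (le_INR 1); lia).
  assert (HMK : INR K < INR M) by (apply lt_INR; lia).
  unfold gamma_u.
  match goal with |- context [sqrt ?x] => pose proof (sqrt_pos x) end.
  enough (0 <= (INR K + INR tau) / (2 * INR tau * (INR M - INR K))) by nra.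
  apply Rlt_le, Rdiv_lt_0_compat; nra.
Qed.

Lemma sqrt_sq_add_le (b e x : R) :
  0 <= b -> 0 <= e -> x <= 2 * b * e + e ^ 2 -> sqrt (b ^ 2 + x) <= b + e.
Proof.
  intros Hb He Hx.
  rewrite <- (sqrt_pow2 (b + e)) by lra.
  apply sqrt_le_1_alt. nra.
Qed.

Lemma gamma_u_2_1_le tau T Rate :
  0 < Rate -> (1 <= tau)%nat -> (tau < T)%nat ->
  let t := INR tau in
  gamma_u 2 1 tau T Rate <= 1 / (1 + t) + (1 + t) / t * (Rpower 2 (Rate / (1 - t / INR T)) - 1).
Proof.
  intros HR Htau HtT t.
  assert (Ht : 1 <= t) by (apply (le_INR 1); lia).
  pose proof (snr_term_nonneg 2 1 tau T Rate HR (le_n 1) HtT) as Hc.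
  unfold gamma_u. unfold snr_term in *. fold t in Hc |- *.
  change (INR 1) with 1 in *. change (INR 2) with 2. rewrite Rmult_1_l in *.
  set (c := Rpower 2 (Rate / (1 - t / INR T)) - 1) in *.
  set (b := (1 + t) / (2 * t * (2 - 1)) * c).
  assert (Hb : 0 <= b) by (apply Rmult_le_pos; [apply Rlt_le, Rdiv_lt_0_compat|]; lra).
  assert (Hsqrt : sqrt (b ^ 2 + c / (t * (2 - 1))) <= b + 1 / (1 + t)).
  { apply sqrt_sq_add_le; [lra | apply Rlt_le, Rdiv_lt_0_compat; lra |].
    replace (c / (t * (2 - 1))) with (2 * b * (1 / (1 + t))) by (unfold b; field; lra).
    pose proof (pow2_ge_0 (1 / (1 + t))); lra. }
  replace ((1 + t) / t * c) with (2 * b) by (unfold b; field; lra).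
  lra.
Qed.

Section Denominator.

Variables (Rate alpha rho_r rho_d rho_s rho_0 : R) (T : nat).
Hypotheses (HR : 0 < Rate) (Halpha : 0 <= alpha) (Hr : 0 <= rho_r) (Hd : 0 <= rho_d)
  (Hs : 0 < rho_s) (H0 : 0 <= rho_0).

Local Notation denom M K tau := (zeta_denom M K tau Rate alpha rho_r rho_d rho_s rho_0 T).

Lemma zeta_denom_ge_base M K tau :
  admissible M K tau T ->
  rho_s + (rho_d + 8 * rho_0 / (3 * INR T))
    + INR M * (rho_r + 2 * rho_0 + 4 * rho_0 / INR T) <= denom M K tau.
Proof using HR Halpha Hd H0.
  intros Had.
  pose proof (gamma_u_nonneg M K tau T Rate HR Had) as Hg.
  destruct Had as (HK & _ & HtT & _).
  assert (HK1 : 1 <= INR K) by (apply (le_INR 1); lia).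
  assert (HM : 0 <= INR M) by apply pos_INR.
  assert (Hq : 0 <= rho_0 / INR T)
    by (apply Rmult_le_pos; [lra | apply Rlt_le, Rinv_0_lt_compat, lt_0_INR; lia]).
  unfold zeta_denom.
  replace (8 * INR K ^ 2 * rho_0 / (3 * INR T)) with (8 / 3 * INR K ^ 2 * (rho_0 / INR T))
    by (field; apply not_0_INR; lia).
  replace (8 * rho_0 / (3 * INR T)) with (8 / 3 * (rho_0 / INR T))
    by (field; apply not_0_INR; lia).
  replace (4 * INR K ^ 2 * rho_0 / INR T) with (4 * INR K ^ 2 * (rho_0 / INR T))
    by (field; apply not_0_INR; lia).
  replace (4 * rho_0 / INR T) with (4 * (rho_0 / INR T)) by (field; apply not_0_INR; lia).
  assert (HK2 : 1 <= INR K ^ 2) by nra.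
  assert (HK3 : 1 <= INR K ^ 3) by nra.
  assert (0 <= alpha * INR K * gamma_u M K tau T Rate)
    by (apply Rmult_le_pos; [apply Rmult_le_pos|]; lra).
  assert (rho_d + 8 / 3 * (rho_0 / INR T)
          <= INR K * (rho_d + 8 / 3 * INR K ^ 2 * (rho_0 / INR T))) by nra.
  assert (rho_r + 2 * rho_0 + 4 * (rho_0 / INR T)
          <= rho_r + 2 * INR K * rho_0 + 4 * INR K ^ 2 * (rho_0 / INR T)) by nra.
  nra.
Qed.

Lemma zeta_denom_2_1 tau :
  denom 2 1 tau = alpha * gamma_u 2 1 tau T Rate + rho_s + (rho_d + 8 * rho_0 / (3 * INR T))
    + 2 * (rho_r + 2 * rho_0 + 4 * rho_0 / INR T).
Proof using.
  unfold zeta_denom, Rdiv. simpl INR. ring.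
Qed.

Lemma zeta_denom_pos M K tau : admissible M K tau T -> 0 < denom M K tau.
Proof using HR Halpha Hr Hd Hs H0.
  intros Had. eapply Rlt_le_trans; [| exact (zeta_denom_ge_base M K tau Had)].
  destruct Had as (_ & _ & HtT & _).
  assert (HT : 0 < INR T) by (apply lt_0_INR; lia).
  assert (0 <= 8 * rho_0 / (3 * INR T))
    by (apply Rmult_le_pos; [|apply Rlt_le, Rinv_0_lt_compat]; lra).
  assert (0 <= 4 * rho_0 / INR T)
    by (apply Rmult_le_pos; [|apply Rlt_le, Rinv_0_lt_compat]; lra).
  pose proof (pos_INR M). nra.
Qed.

Lemma zeta_zf_le_denom M K tau M' K' tau' :
  admissible M K tau T -> admissible M' K' tau' T ->
  zeta_zf M' K' tau' Rate alpha rho_r rho_d rho_s rho_0 T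
    <= zeta_zf M K tau Rate alpha rho_r rho_d rho_s rho_0 T ->
  denom M K tau <= denom M' K' tau'.
Proof using HR Halpha Hr Hd Hs H0.
  intros Had Had' Hle. unfold zeta_zf in Hle.
  pose proof (zeta_denom_pos M K tau Had). pose proof (zeta_denom_pos M' K' tau' Had').
  apply Rmult_le_reg_l with (r := Rate) in Hle; [|exact HR].
  rewrite <- (Rinv_inv (denom M K tau)), <- (Rinv_inv (denom M' K' tau')).
  apply Rinv_le_contravar; [apply Rinv_0_lt_compat; lra | exact Hle].
Qed.

End Denominator.

Theorem theorem2 (Rate alpha rho_r rho_d rho_s rho_0 : R) (T : nat) :
  0 < Rate -> 1 < alpha -> 0 < rho_r -> 0 < rho_d -> 0 < rho_s -> 0 < rho_0 ->
  (1 < T)%nat ->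
  let s := INR (Nat.sqrt T) in
  rho_r + 2 * rho_0 >=
    alpha / (1 + s)
    + alpha * (1 + s) / s * (Rpower 2 (Rate / (1 - s / INR T)) - 1) ->
  forall M K tau : nat,
    admissible M K tau T ->
    (forall M' K' tau' : nat, admissible M' K' tau' T ->
       zeta_zf M' K' tau' Rate alpha rho_r rho_d rho_s rho_0 T
       <= zeta_zf M K tau Rate alpha rho_r rho_d rho_s rho_0 T) ->
    M = 2%nat /\ K = 1%nat.
Proof.
  intros HR Halpha Hr Hd Hs H0 HT s Hcond M K tau Had Hmax.
  assert (Hsqrt1 : (1 <= Nat.sqrt T)%nat).
  { pose proof (Nat.sqrt_le_mono 2 T). rewrite Nat.sqrt_2 in *. lia. }
  assert (HsqrtT : (Nat.sqrt T < T)%nat) by (apply Nat.sqrt_lt_lin; lia).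
  assert (Had0 : admissible 2 1 (Nat.sqrt T) T) by (unfold admissible; lia).
  assert (Hpower : alpha * gamma_u 2 1 (Nat.sqrt T) T Rate <= rho_r + 2 * rho_0).
  { pose proof (gamma_u_2_1_le (Nat.sqrt T) T Rate HR Hsqrt1 HsqrtT) as Hgamma.
    fold s in Hgamma.
    assert (Hs1 : 1 <= s) by (apply (le_INR 1); lia).
    apply Rmult_le_compat_l with (r := alpha) in Hgamma; [|lra].
    set (c := Rpower 2 (Rate / (1 - s / INR T)) - 1) in *.
    replace (alpha * (1 / (1 + s) + (1 + s) / s * c))
      with (alpha / (1 + s) + alpha * (1 + s) / s * c) in Hgamma by (field; lra).
    lra. }
  pose proof (zeta_zf_le_denom Rate alpha rho_r rho_d rho_s rho_0 T HR
    ltac:(lra) ltac:(lra) ltac:(lra) Hs ltac:(lra) _ _ _ _ _ _ Had Had0 (Hmax _ _ _ Had0))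
    as Hopt.
  pose proof (zeta_denom_ge_base Rate alpha rho_r rho_d rho_s rho_0 T HR
    ltac:(lra) ltac:(lra) ltac:(lra) M K tau Had) as Hlow.
  rewrite zeta_denom_2_1 in Hopt.
  assert (Hq : 0 < 4 * rho_0 / INR T) by (apply Rdiv_lt_0_compat; [lra | apply lt_0_INR; lia]).
  pose proof Had as (HK & _ & _ & HKM).
  enough (HM : INR M < INR 3) by (apply INR_lt in HM; lia).
  simpl INR.
  nra.
Qed.
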